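(* For every $X\in\mathbb R^d$ and every $\psi\in\mathbb H$, $\mathbb M[(X+\zeta X)^*a\,D\psi]=0$.
   Context: $(\Omega,\mathcal G,\mu)$ is a probability space with an ergodic group $\{\tau_x\}_{x\in\mathbb R^d}$ of measure-preserving transformations, $(x,\omega)\mapsto g(\tau_x\omega)$ jointly measurable; $\mathbb M$ expectation, $(\cdot,\cdot)_2,|\cdot|_2$ the $L^2(\Omega)$ inner product and norm. $D_i$ is the $L^2(\Omega)$-generator of $g\mapsto g(\tau_{he_i}\cdot)$, $D\psi=(D_i\psi)_i$. $\sigma:\Omega\to\mathbb R^{d\times d}$ with $x\mapsto\sigma(\tau_x\omega)$ smooth, bounded with bounded derivatives uniformly in $\omega$; $a=\sigma\sigma^*$, $\Lambda I\le a\le\Lambda^{-1}I$; $b_j=\frac12D_ia_{ij}$ (summation convention). $\mathcal C=\mathrm{Span}\{g\star\phi:g\in L^\infty(\Omega),\phi\in C_c^\infty(\mathbb R^d)\}$, $g\star\phi(\omega)=\int g(\tau_x\omega)\phi(x)dx$; $\mathbb H$ the closure of $\mathcal C$ for $|\varphi|_2^2+|D\varphi|_2^2$. $U_\lambda f$ is the unique $w\in\mathbb H$ with $\lambda(w,\varphi)_2+\frac12(a_{ij}D_iw,D_j\varphi)_2=(f,\varphi)_2$ for all $\varphi\in\mathbb H$. $u^j_\lambda=U_\lambda(b_j)$; there exist $\zeta^j\in L^2(\Omega)^d$ with $\lambda|u^j_\lambda|_2^2+|Du^j_\lambda-\zeta^j|_2\to0$ as $\lambda\to0$; $\zeta$ is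 the matrix with entries $\zeta_{ij}=\zeta^j_i$. *)

From HB Require Import structures.
From mathcomp Require Import all_boot all_order all_algebra.
From mathcomp Require Import all_classical all_reals all_analysis.
Set Implicit Arguments. Unset Strict Implicit. Unset Printing Implicit Defensive.
Import Order.TTheory GRing.Theory Num.Theory.
Import numFieldNormedType.Exports.
Local Open Scope classical_set_scope.
Local Open Scope ring_scope.

Definition ecoord {R : realType} {d : nat} (i : 'I_d) : 'rV[R]_d := delta_mx 0 i.

Fixpoint iderive {R : realType} {d : nat} (s : seq 'I_d) (f : 'rV[R]_d -> R)
  : 'rV[R]_d -> R :=
  match s with
  | [::] => f
  | i :: s' => 'D_(ecoord i) (iderive s' f)
  end.

Definition smooth {R : realType} {d : nat} (f : 'rV[R]_d -> R) : Prop :=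
  forall s : seq 'I_d,
    (forall (i : 'I_d) (x : 'rV[R]_d), derivable (iderive s f) x (ecoord i))
    /\ continuous (iderive s f).

(* bounded (hence, for a continuous function, compact) support *)
Definition bounded_support {R : realType} {d : nat} (f : 'rV[R]_d -> R) : Prop :=
  exists r : R, forall x : 'rV[R]_d, r < `|x| -> f x = 0.

Definition set_coord {R : realType} {d : nat} (x : 'rV[R]_d) (i : 'I_d) (t : R)
  : 'rV[R]_d := \row_k (if k == i then t else x 0 k).

Fixpoint iint {R : realType} {d : nat} (s : seq 'I_d) (F : 'rV[R]_d -> R)
  (x : 'rV[R]_d) : R :=
  match s with
  | [::] => F x
  | i :: s' => Rintegral (@lebesgue_measure R) setT
                 (fun t => iint s' F (set_coord x i t))
  end.

(* Lebesgue integral over R^d (as an iterated integral, = by Fubini for the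
   bounded compactly supported measurable integrands used below) *)
Definition intRd {R : realType} {d : nat} (F : 'rV[R]_d -> R) : R :=
  iint (enum 'I_d) F 0.

Section Medium.
Context {R : realType} {d : nat} {disp : measure_display}
  {Omega : measurableType disp}.
Implicit Types (mu : probability Omega R) (tau : 'rV[R]_d -> Omega -> Omega).

Definition mp_group mu tau : Prop :=
  [/\ (forall x, measurable_fun setT (tau x)),
      (forall w, tau 0 w = w),
      (forall x y w, tau (x + y) w = tau x (tau y w)) &
      (forall x (A : set Omega), measurable A -> mu (tau x @^-1` A) = mu A)].

Definition ergodic mu tau : Prop :=
  forall A : set Omega, measurable A -> (forall x, tau x @^-1` A = A) ->
    mu A = 0%E \/ mu A = 1%E.

(* generators of the product sigma-algebra Borel(R^d) (x) G on R^d * Omega *)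
Definition prod_gen : set (set ('rV[R]_d * Omega)) :=
  [set S | (exists (i : 'I_d) (B : set R), measurable B /\ S = [set p : 'rV[R]_d * Omega | B (p.1 0 i)])
        \/ (exists A : set Omega, measurable A /\ S = [set p : 'rV[R]_d * Omega | A p.2])].

(* (x, w) |-> g (tau_x w) is jointly measurable for every measurable g *)
Definition jointly_measurable tau : Prop :=
  forall A : set Omega, measurable A -> <<s prod_gen >> [set p : 'rV[R]_d * Omega | A (tau p.1 p.2)].

Definition L2 mu (f : Omega -> R) : Prop :=
  measurable_fun setT f /\ (\int[mu]_w ((f w) ^+ 2)%:E < +oo)%E.

Definition ip mu (f g : Omega -> R) : R := Rintegral mu setT (fun w => f w * g w).
Definition expect mu (f : Omega -> R) : R := Rintegral mu setT f.

Definition L2sqdist mu (f g : Omega -> R) : \bar R :=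
  (\int[mu]_w (((f w - g w) ^+ 2)%:E))%E.

(* isD mu tau i g Dg : g is in the domain of the L^2-generator D_i of the
   group g |-> g(tau_{h e_i} .), and D_i g = Dg *)
Definition isD mu tau (i : 'I_d) (g Dg : Omega -> R) : Prop :=
  [/\ L2 mu g, L2 mu Dg &
    (fun h : R => (\int[mu]_w ((((g (tau (h *: ecoord i) w) - g w) / h - Dg w) ^+ 2)%:E))%E)
      @ (0 : R)^' --> (0 : \bar R)].

Definition conv tau (g : Omega -> R) (phi : 'rV[R]_d -> R) (w : Omega) : R :=
  intRd (fun x => g (tau x w) * phi x).

(* the class C = Span{ g * phi : g in L^infty, phi in C_c^infty(R^d) } *)
Definition inC tau (c : Omega -> R) : Prop :=
  exists (m : nat) (g : 'I_m -> Omega -> R) (phi : 'I_m -> 'rV[R]_d -> R),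
    [/\ (forall k, measurable_fun setT (g k) /\ exists M : R, forall w, `|g k w| <= M),
        (forall k, smooth (phi k) /\ bounded_support (phi k)) &
        c = (fun w => \sum_(k < m) conv tau (g k) (phi k) w)].

(* psi in H (closure of C for |.|_2^2 + |D .|_2^2), with D psi = Dpsi *)
Definition inH mu tau (psi : Omega -> R) (Dpsi : 'I_d -> Omega -> R) : Prop :=
  [/\ L2 mu psi, (forall i, isD mu tau i psi (Dpsi i)) &
    exists (c : nat -> Omega -> R) (Dc : nat -> 'I_d -> Omega -> R),
      [/\ (forall n, inC tau (c n) /\ forall i, isD mu tau i (c n) (Dc n i)),
          (fun n => L2sqdist mu (c n) psi) @ \oo --> 0%E &
          (forall i, (fun n => L2sqdist mu (Dc n i) (Dpsi i)) @ \oo --> 0%E)]].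

End Medium.

Definition amat {R : realType} {d : nat} {T : Type} (sigma : T -> 'M[R]_d) (w : T)
  : 'M[R]_d := sigma w *m (sigma w)^T.

(* b_j = 1/2 sum_i D_i a_ij, given da i j = D_i a_ij *)
Definition bvec {R : realType} {d : nat} {T : Type} (da : 'I_d -> 'I_d -> T -> R)
  (j : 'I_d) (w : T) : R := 2^-1 * \sum_(i < d) da i j w.

From HB Require Import structures.
From mathcomp Require Import all_boot all_order all_algebra.
From mathcomp Require Import all_classical all_reals all_analysis.
From mathcomp Require Import ring lra measurable_realfun.
Import Order.TTheory GRing.Theory Num.Theory.
Import numFieldNormedType.Exports.
Local Open Scope classical_set_scope.
Local Open Scope ring_scope.

(* Stationarity makes each D_i skew-adjoint: the shift along h e_i does not change the mean
   of g * phi, so the difference quotients satisfy a discrete integration by parts, and in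
   the limit (D_i g, phi) + (g, D_i phi) = 0.  Applied to g = a_ij this gives
   (b_j, psi) = -1/2 sum_i M[a_ij D_i psi].  Testing the resolvent equation of u^j_lam
   against psi and letting lam -> 0, where |lam (u^j_lam, psi)| <= sqrt lam |psi|_2
   (lam |u^j_lam|_2^2)^(1/2) and D u^j_lam -> zeta^j in L^2, gives
   1/2 M[sum_ik a_ik zeta_ij D_k psi] = (b_j, psi).  By symmetry of a the two identities
   add up to M[(e_j + zeta e_j)^* a D psi] = 0 for every j, and the claim is linear in X. *)

Lemma ge0_quadratic_discriminant {R : realFieldType} (A B C : R) : 0 <= C ->
  (forall s, 0 <= A + 2 * s * B + s ^+ 2 * C) -> B ^+ 2 <= A * C.
Proof.
move=> C0 q_ge0; have [C_eq0|C_neq0] := eqVneq C 0.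
  rewrite C_eq0 mulr0; have [->|B_neq0] := eqVneq B 0; first by rewrite expr0n.
  have := q_ge0 (- (A + 1) / (2 * B)); rewrite C_eq0 mulr0 addr0.
  have -> : 2 * (- (A + 1) / (2 * B)) * B = - (A + 1) by field.
  lra.
have C_gt0 : 0 < C by rewrite lt_def C_neq0 C0.
have := q_ge0 (- B / C).
have -> : A + 2 * (- B / C) * B + (- B / C) ^+ 2 * C = A - B ^+ 2 / C.
  by rewrite expr2; field.
by rewrite subr_ge0 ler_pdivrMr.
Qed.

Section cvg0.
Context {R : realType} {U : Type} {F : set_system U} {FF : ProperFilter F}.
Implicit Types (f g : U -> R).

Lemma norm_le_cvg0_eq0 (c : R) f :
  f @ F --> 0 -> (\forall x \near F, `|c| <= f x) -> c = 0.
Proof.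
move=> f0 cf; have := limr_ge (cvgP _ f0) cf; rewrite (cvg_lim (@Rhausdorff R) f0).
by move=> c_le0; apply/normr0_eq0/le_anti; rewrite c_le0 normr_ge0.
Qed.

Lemma cvg0D {f g} : f @ F --> 0 -> g @ F --> 0 -> (fun x => f x + g x) @ F --> 0.
Proof. by move=> f0 g0; have := cvgD f0 g0; rewrite addr0; apply. Qed.

Lemma cvg0M {f g} {l : R} :
  f @ F --> 0 -> g @ F --> l -> (fun x => f x * g x) @ F --> 0.
Proof. by move=> f0 gl; have := cvgM f0 gl; rewrite mul0r; apply. Qed.

Lemma cvg0_sqrt {f} : f @ F --> 0 -> (fun x => Num.sqrt (f x)) @ F --> 0.
Proof.
by move=> f0; have := continuous_cvg _ (@sqrt_continuous R 0) f0; rewrite sqrtr0; apply.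
Qed.

End cvg0.

Lemma uniform_bound_finite {R : realDomainType} {I : finType} {U : Type}
  (F : I -> U -> R) :
  (forall i, exists M, forall x, `|F i x| <= M) -> exists M, forall i x, `|F i x| <= M.
Proof.
move=> /choice[M FM]; exists (\sum_i `|M i|) => i x.
apply: le_trans (FM i x) (le_trans (ler_norm _) _).
by rewrite (bigD1 i) //= lerDl sumr_ge0.
Qed.

Section amat.
Context {R : realType} {d : nat} {T : Type} (sigma : T -> 'M[R]_d).

Lemma amatE w i j : amat sigma w i j = \sum_k sigma w i k * sigma w j k.
Proof. by rewrite !mxE; apply: eq_bigr => k _; rewrite mxE. Qed.

Lemma amat_sym w i j : amat sigma w i j = amat sigma w j i.
Proof. by rewrite !amatE; apply: eq_bigr => k _; rewrite mulrC. Qed.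

Lemma amat_bounded {S : R} : (forall k l w, `|sigma w k l| <= S) ->
  forall i j w, `|amat sigma w i j| <= S ^+ 2 *+ d.
Proof.
move=> sigmaS i j w; rewrite amatE -[X in _ *+ X]card_ord -sumr_const.
apply: le_trans (ler_norm_sum _ _ _) (ler_sum _ _) => k _.
by rewrite normrM expr2 ler_pM.
Qed.

End amat.

Lemma quad_form_expand {R : comPzRingType} {d : nat} (X : 'cV[R]_d) (Z M : 'M[R]_d)
    (v : 'I_d -> R) :
  ((X + Z *m X)^T *m M *m \col_k v k) 0 0 =
  \sum_l X l 0 * (\sum_k M l k * v k + \sum_i \sum_k M i k * Z i l * v k).
Proof.
rewrite mxE; under eq_bigr => k _ do rewrite !mxE big_distrl /=.
under eq_bigr => k _ do
  under eq_bigr => m _ do rewrite !mxE mulrDl mulrDl big_distrl big_distrl /=.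
under eq_bigr => k _ do rewrite big_split /=.
rewrite big_split /=; under [RHS]eq_bigr => l _ do rewrite mulrDr.
rewrite big_split /=; congr (_ + _).
  rewrite exchange_big /=; apply: eq_bigr => l _; rewrite mulr_sumr.
  by apply: eq_bigr => k _; ring.
rewrite exchange_big /=; under eq_bigr => m _ do rewrite exchange_big /=.
rewrite exchange_big /=; apply: eq_bigr => l _; rewrite mulr_sumr.
apply: eq_bigr => m _; rewrite mulr_sumr; apply: eq_bigr => k _; ring.
Qed.

Section probability_space.
Context {R : realType} {disp : measure_display} {T : measurableType disp}
  {mu : probability T R}.
Implicit Types (f g : T -> R).

Definition Rintegrable f := mu.-integrable setT (EFin \o f).

Lemma eq_Rintegrable {f g} : f =1 g -> Rintegrable f -> Rintegrable g.
Proof. by move=> fg; apply: eq_integrable => // x _ /=; rewrite fg. Qed.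

Lemma RintegrableD {f g} :
  Rintegrable f -> Rintegrable g -> Rintegrable (fun w => f w + g w).
Proof. exact: integrableD. Qed.

Lemma RintegrableZ (k : R) {f} : Rintegrable f -> Rintegrable (fun w => k * f w).
Proof.
move=> /(integrableZl measurableT k).
by apply: eq_integrable => // x _ /=; rewrite EFinM.
Qed.

Lemma Rintegrable_cst (k : R) : Rintegrable (fun _ => k).
Proof. exact: finite_measure_integrable_cst. Qed.

Lemma Rintegrable_sum {I : Type} (s : seq I) {F : I -> T -> R} :
  (forall i, Rintegrable (F i)) -> Rintegrable (fun w => \sum_(i <- s) F i w).
Proof.
move=> iF; elim: s => [|i s IH].
  by apply: (eq_Rintegrable _ (Rintegrable_cst 0)) => w; rewrite big_nil.
by apply: (eq_Rintegrable _ (RintegrableD (iF i) IH)) => w; rewrite big_cons.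
Qed.

Lemma le_Rintegrable {f} g : measurable_fun setT f ->
  (forall w, `|f w| <= `|g w|) -> Rintegrable g -> Rintegrable f.
Proof.
move=> mf fg /le_integrable; apply => //; first exact/measurable_EFinP.
by move=> w _ /=; rewrite lee_fin.
Qed.

Lemma Rintegral_sum {I : Type} (s : seq I) {F : I -> T -> R} :
  (forall i, Rintegrable (F i)) ->
  Rintegral mu setT (fun w => \sum_(i <- s) F i w) =
  \sum_(i <- s) Rintegral mu setT (F i).
Proof.
move=> iF; elim: s => [|i s IH].
  under eq_Rintegral do rewrite big_nil.
  by rewrite Rintegral_cst // mul0r big_nil.
under eq_Rintegral do rewrite big_cons.
rewrite RintegralD ?IH ?big_cons //; [exact: iF | exact: Rintegrable_sum].
Qed.

Lemma L2_measurable {f} : L2 mu f -> measurable_fun setT f.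
Proof. by case. Qed.

Lemma L2P f :
  L2 mu f <-> measurable_fun setT f /\ Rintegrable (fun w => f w ^+ 2).
Proof.
have sq_abs (w : T) : (`|(f w ^+ 2)%:E| = (f w ^+ 2)%:E)%E.
  by rewrite gee0_abs // lee_fin sqr_ge0.
split=> [[mf fi]|[mf /integrableP[_ fi]]]; split => //.
  apply/integrableP; split; first by apply/measurable_EFinP; exact: measurable_funX.
  by rewrite (eq_integral _ _ (fun w _ => sq_abs w)).
by move: fi; rewrite (eq_integral _ _ (fun w _ => sq_abs w)).
Qed.

Lemma L2_sqr {f} : L2 mu f -> Rintegrable (fun w => f w ^+ 2).
Proof. by case/L2P. Qed.

Lemma Rintegrable_L2M {f g} :
  L2 mu f -> L2 mu g -> Rintegrable (fun w => f w * g w).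
Proof.
move=> Lf Lg; apply: (le_Rintegrable (fun w => f w ^+ 2 + g w ^+ 2)).
- exact: measurable_funM (L2_measurable Lf) (L2_measurable Lg).
- move=> w; rewrite [X in _ <= X]ger0_norm ?addr_ge0 ?sqr_ge0 //.
  rewrite normrM -(real_normK (num_real (f w))) -(real_normK (num_real (g w))).
  by have := normr_ge0 (f w); have := normr_ge0 (g w); nra.
- exact: RintegrableD (L2_sqr Lf) (L2_sqr Lg).
Qed.

Lemma L2D {f g} : L2 mu f -> L2 mu g -> L2 mu (fun w => f w + g w).
Proof.
move=> Lf Lg; have mfg := measurable_funD (L2_measurable Lf) (L2_measurable Lg).
apply/L2P; split => //.
apply: (le_Rintegrable (fun w => 2 * f w ^+ 2 + 2 * g w ^+ 2)).
- exact: measurable_funX.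
- move=> w; rewrite ger0_norm ?sqr_ge0 // ger0_norm; last first.
    by rewrite addr_ge0 // mulr_ge0 // sqr_ge0.
  by have := sqr_ge0 (f w - g w); rewrite !expr2; nra.
- exact: RintegrableD (RintegrableZ 2 (L2_sqr Lf)) (RintegrableZ 2 (L2_sqr Lg)).
Qed.

Lemma L2Z (k : R) {f} : L2 mu f -> L2 mu (fun w => k * f w).
Proof.
move=> Lf; apply/L2P; split.
  exact: measurable_funM (measurable_cst k) (L2_measurable Lf).
by apply: (eq_Rintegrable _ (RintegrableZ (k ^+ 2) (L2_sqr Lf))) => w; rewrite exprMn.
Qed.

Lemma L2B {f g} : L2 mu f -> L2 mu g -> L2 mu (fun w => f w - g w).
Proof.
move=> Lf /(L2Z (-1)) Lg; have := L2D Lf Lg.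
by congr L2; apply/funext => w; rewrite mulN1r.
Qed.

Lemma L2_cst (k : R) : L2 mu (fun _ => k).
Proof. by apply/L2P; split; [exact: measurable_cst | exact: Rintegrable_cst]. Qed.

Lemma L2_sum {I : Type} (s : seq I) {F : I -> T -> R} :
  (forall i, L2 mu (F i)) -> L2 mu (fun w => \sum_(i <- s) F i w).
Proof.
move=> LF; elim: s => [|i s IH].
  by under eq_fun do rewrite big_nil; exact: L2_cst.
by have := L2D (LF i) IH; congr L2; apply/funext => w; rewrite big_cons.
Qed.

Lemma L2_boundedM {f g} {C : R} : measurable_fun setT f -> (forall w, `|f w| <= C) ->
  L2 mu g -> L2 mu (fun w => f w * g w).
Proof.
move=> mf fC Lg; have mfg := measurable_funM mf (L2_measurable Lg).
apply/L2P; split => //.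
apply: (le_Rintegrable (fun w => C ^+ 2 * g w ^+ 2)).
- exact: measurable_funX.
- move=> w; rewrite ger0_norm ?sqr_ge0 // ger0_norm ?exprMn; last by rewrite mulr_ge0 ?sqr_ge0.
  rewrite ler_wpM2r ?sqr_ge0 // -(real_normK (num_real (f w))).
  by rewrite lerXn2r ?nnegrE ?(le_trans _ (fC w)).
- exact: RintegrableZ (L2_sqr Lg).
Qed.

Lemma L2_bounded {f} {C : R} : measurable_fun setT f -> (forall w, `|f w| <= C) -> L2 mu f.
Proof.
by move=> mf fC; have := L2_boundedM mf fC (L2_cst 1); under eq_fun do rewrite mulr1.
Qed.

Lemma ipC f g : ip mu f g = ip mu g f.
Proof. by apply: eq_Rintegral => w _; rewrite mulrC. Qed.

Lemma ip_ge0 f : 0 <= ip mu f f.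
Proof. by apply: Rintegral_ge0 => w _; rewrite -expr2 sqr_ge0. Qed.

Lemma eq_ipl {f g} h : f =1 g -> ip mu f h = ip mu g h.
Proof. by move=> fg; apply: eq_Rintegral => w _; rewrite fg. Qed.

Lemma ipDl {f g h} : L2 mu f -> L2 mu g -> L2 mu h ->
  ip mu (fun w => f w + g w) h = ip mu f h + ip mu g h.
Proof.
move=> Lf Lg Lh; rewrite /ip -RintegralD //; try exact: Rintegrable_L2M.
by apply: eq_Rintegral => w _; rewrite mulrDl.
Qed.

Lemma ipZl (k : R) {f h} : L2 mu f -> L2 mu h ->
  ip mu (fun w => k * f w) h = k * ip mu f h.
Proof.
move=> Lf Lh; rewrite /ip -RintegralZl //; last exact: Rintegrable_L2M.
by apply: eq_Rintegral => w _; rewrite mulrA.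
Qed.

Lemma ipDr {f g h} : L2 mu f -> L2 mu g -> L2 mu h ->
  ip mu h (fun w => f w + g w) = ip mu h f + ip mu h g.
Proof. by move=> Lf Lg Lh; rewrite ipC ipDl // !(ipC h). Qed.

Lemma ipZr (k : R) {f h} : L2 mu f -> L2 mu h ->
  ip mu h (fun w => k * f w) = k * ip mu h f.
Proof. by move=> Lf Lh; rewrite ipC ipZl // ipC. Qed.

Lemma ipBl {f g h} : L2 mu f -> L2 mu g -> L2 mu h ->
  ip mu (fun w => f w - g w) h = ip mu f h - ip mu g h.
Proof.
move=> Lf Lg Lh; rewrite /ip -RintegralB //; try exact: Rintegrable_L2M.
by apply: eq_Rintegral => w _; rewrite mulrBl.
Qed.

Lemma ipBr {f g h} : L2 mu f -> L2 mu g -> L2 mu h ->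
  ip mu h (fun w => f w - g w) = ip mu h f - ip mu h g.
Proof. by move=> Lf Lg Lh; rewrite ipC ipBl // ipC (ipC g). Qed.

Lemma ip_suml {I : Type} (s : seq I) {F : I -> T -> R} {h} :
  (forall i, L2 mu (F i)) -> L2 mu h ->
  ip mu (fun w => \sum_(i <- s) F i w) h = \sum_(i <- s) ip mu (F i) h.
Proof.
move=> LF Lh; rewrite /ip -Rintegral_sum => [|i]; last exact: Rintegrable_L2M.
by apply: eq_Rintegral => w _; rewrite mulr_suml.
Qed.

Lemma ip_Cauchy_Schwarz {f g} : L2 mu f -> L2 mu g ->
  ip mu f g ^+ 2 <= ip mu f f * ip mu g g.
Proof.
move=> Lf Lg; apply: ge0_quadratic_discriminant; first exact: ip_ge0.
move=> s; have Lsg := L2Z s Lg; have Lfsg := L2D Lf Lsg.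
have := ip_ge0 (fun w => f w + s * g w).
by rewrite ipDl // !ipDr // !ipZl // !ipZr // (ipC g f); lra.
Qed.

Lemma normr_ip_le {f g} : L2 mu f -> L2 mu g ->
  `|ip mu f g| <= Num.sqrt (ip mu f f) * Num.sqrt (ip mu g g).
Proof.
move=> Lf Lg; rewrite -sqrtrM ?ip_ge0 // -sqrtr_sqr ler_sqrt ?ip_Cauchy_Schwarz //.
by rewrite mulr_ge0 ?ip_ge0.
Qed.

Lemma normr_scale_ip_le {k : R} {f g} : 0 <= k <= 1 -> L2 mu f -> L2 mu g ->
  `|k * ip mu f g| <= Num.sqrt (k * ip mu f f) * Num.sqrt (ip mu g g).
Proof.
move=> /andP[k_ge0 k_le1] Lf Lg; rewrite normrM ger0_norm //.
apply: le_trans (ler_wpM2l k_ge0 (normr_ip_le Lf Lg)) _.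
rewrite mulrA ler_wpM2r ?sqrtr_ge0 //.
have -> : k * Num.sqrt (ip mu f f) = Num.sqrt (k ^+ 2 * ip mu f f).
  by rewrite sqrtrM ?sqr_ge0 // sqrtr_sqr ger0_norm.
rewrite ler_sqrt ?mulr_ge0 ?ip_ge0 // expr2 -mulrA.
by rewrite ler_piMl ?mulr_ge0 ?ip_ge0.
Qed.

Lemma normr_sum_ip_le {I J : finType} {v : I -> T -> R} {F : I -> J -> T -> R} :
  (forall i, L2 mu (v i)) -> (forall i j, L2 mu (F i j)) ->
  `|\sum_i \sum_j ip mu (v i) (F i j)| <=
  Num.sqrt (\sum_i ip mu (v i) (v i)) * \sum_i \sum_j Num.sqrt (ip mu (F i j) (F i j)).
Proof.
move=> Lv LF; apply: le_trans (ler_norm_sum _ _ _) _; rewrite mulr_sumr.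
apply: ler_sum => i _; apply: le_trans (ler_norm_sum _ _ _) _; rewrite mulr_sumr.
apply: ler_sum => j _; apply: le_trans (normr_ip_le (Lv i) (LF i j)) _.
rewrite ler_wpM2r ?sqrtr_ge0 // ler_sqrt ?sumr_ge0 // => [|i' _]; last exact: ip_ge0.
by rewrite (bigD1 i) //= lerDl sumr_ge0 // => i' _; exact: ip_ge0.
Qed.

Section measure_preserving.
Context {t : T -> T} (t_measurable : measurable_fun setT t)
  (t_preserving : forall A, measurable A -> mu (t @^-1` A) = mu A).

Let pushforward_t (G : T -> \bar R) :
  (\int[pushforward mu t]_x G x = \int[mu]_x G x)%E.
Proof. by apply: eq_measure_integral => A mA _; exact: t_preserving. Qed.

Lemma Rintegrable_comp {f} : Rintegrable f -> Rintegrable (f \o t).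
Proof.
move=> /integrableP[mf fi]; apply/integrableP; split.
  exact: measurableT_comp mf t_measurable.
have mG : measurable_fun setT (fun x => `|(f x)%:E|%E) by exact: measurableT_comp.
suff <- : (\int[pushforward mu t]_x `|(f x)%:E| = \int[mu]_x `|(f (t x))%:E|)%E.
  by rewrite pushforward_t.
by rewrite (ge0_integral_pushforward t_measurable) // preimage_setT.
Qed.

Lemma Rintegral_comp {f} : Rintegrable f ->
  Rintegral mu setT (f \o t) = Rintegral mu setT f.
Proof.
move=> If; rewrite /Rintegral -(pushforward_t (EFin \o f)).
rewrite (integral_pushforward t_measurable) ?preimage_setT //.
- by case/integrableP: If.
- exact: Rintegrable_comp.
Qed.

Lemma L2_comp {f} : L2 mu f -> L2 mu (f \o t).
Proof.
move=> /L2P[mf If]; apply/L2P; split; first exact: measurableT_comp mf t_measurable.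
exact: Rintegrable_comp If.
Qed.

Lemma ip_comp {f g} : L2 mu f -> L2 mu g -> ip mu (f \o t) (g \o t) = ip mu f g.
Proof.
move=> Lf Lg; exact: (Rintegral_comp (f := fun w => f w * g w) (Rintegrable_L2M Lf Lg)).
Qed.

End measure_preserving.

Section stationary.
Context {d : nat} {tau : 'rV[R]_d -> T -> T}
  (tau_measurable : forall x, measurable_fun setT (tau x))
  (tau_preserving : forall x A, measurable A -> mu (tau x @^-1` A) = mu A).

Section integration_by_parts.
Variable i : 'I_d.

Let shift (h : R) := tau (h *: ecoord i).
Let shift_measurable (h : R) : measurable_fun setT (shift h) := tau_measurable _.
Let shift_preserving (h : R) A : measurable A -> mu (shift h @^-1` A) = mu A :=
  tau_preserving _ A.
Let L2_shift (h : R) {f} : L2 mu f -> L2 mu (f \o shift h) :=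
  L2_comp (shift_measurable h) (shift_preserving h).

Definition dquot (g : T -> R) (h : R) (w : T) : R := (g (shift h w) - g w) / h.

Lemma L2_dquot {g} (h : R) : L2 mu g -> L2 mu (dquot g h).
Proof.
move=> Lg; have := L2Z h^-1 (L2B (L2_shift h Lg) Lg).
by congr L2; apply/funext => w; rewrite /dquot mulrC.
Qed.

Lemma dquot_ibp {g phi} (h : R) : L2 mu g -> L2 mu phi ->
  ip mu (dquot g h) phi + ip mu (g \o shift h) (dquot phi h) = 0.
Proof.
move=> Lg Lphi; have Igphi := Rintegrable_L2M Lg Lphi.
have Ishift := Rintegrable_comp (shift_measurable h) (shift_preserving h) Igphi.
rewrite /ip -RintegralD; last 3 first.
- exact: measurableT.
- exact: Rintegrable_L2M (L2_dquot h Lg) Lphi.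
- exact: Rintegrable_L2M (L2_shift h Lg) (L2_dquot h Lphi).
transitivity (Rintegral mu setT (fun w => h^-1 * ((fun w => g w * phi w) \o shift h) w
                                          - h^-1 * (g w * phi w))).
  by apply: eq_Rintegral => w _; rewrite /dquot /=; ring.
rewrite RintegralB ?RintegralZl //; try exact: RintegrableZ.
by rewrite (Rintegral_comp (shift_measurable h) (shift_preserving h) Igphi) subrr.
Qed.

Lemma isD_dquot_cvg {g Dg} : isD mu tau i g Dg ->
  (fun h : R => ip mu (fun w => dquot g h w - Dg w) (fun w => dquot g h w - Dg w))
    @ 0^' --> 0.
Proof. by case=> _ _ /fine_cvg. Qed.

Lemma ibp_remainder {g Dg phi Dphi} {h : R} : h != 0 ->
  L2 mu g -> L2 mu Dg -> L2 mu phi -> L2 mu Dphi ->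
  ip mu Dg phi + ip mu g Dphi =
  - ip mu (fun w => dquot g h w - Dg w) phi
  - ip mu (g \o shift h) (fun w => dquot phi h w - Dphi w)
  - h * ip mu (dquot g h) Dphi.
Proof.
move=> h_neq0 Lg LDg Lphi LDphi.
have Lgt := L2_shift h Lg; have LQg := L2_dquot h Lg; have LQp := L2_dquot h Lphi.
have shift_dquot : ip mu (g \o shift h) Dphi - ip mu g Dphi = h * ip mu (dquot g h) Dphi.
  rewrite -ipBl // -ipZl //.
  by apply: (eq_ipl Dphi) => w; rewrite /dquot mulrCA divff // mulr1.
rewrite ipBl // ipBr // -shift_dquot.
by have := dquot_ibp h Lg Lphi; lra.
Qed.

Lemma isD_ibp {g Dg phi Dphi} : isD mu tau i g Dg -> isD mu tau i phi Dphi ->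
  ip mu Dg phi + ip mu g Dphi = 0.
Proof.
move=> Dg_g Dphi_phi; have [Lg LDg _] := Dg_g; have [Lphi LDphi _] := Dphi_phi.
set Eg := fun h : R => ip mu (fun w => dquot g h w - Dg w) (fun w => dquot g h w - Dg w).
set Ep := fun h : R =>
  ip mu (fun w => dquot phi h w - Dphi w) (fun w => dquot phi h w - Dphi w).
pose c := Num.sqrt (ip mu Dphi Dphi); pose c' := `|ip mu Dg Dphi|.
apply: (norm_le_cvg0_eq0 (F := 0^') _
  (fun h : R => Num.sqrt (Eg h) * Num.sqrt (ip mu phi phi)
    + Num.sqrt (Ep h) * Num.sqrt (ip mu g g) + `|h| * (Num.sqrt (Eg h) * c + c'))).
  have sEg : (fun h => Num.sqrt (Eg h)) @ 0^' --> 0 := cvg0_sqrt (isD_dquot_cvg Dg_g).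
  have sEp : (fun h => Num.sqrt (Ep h)) @ 0^' --> 0 := cvg0_sqrt (isD_dquot_cvg Dphi_phi).
  have id0 : (fun h : R => h) @ 0^' --> 0 by exact: cvg_within.
  apply: cvg0D; first apply: cvg0D.
  - by apply: cvg0M; [exact: sEg | exact: cvg_cst].
  - by apply: cvg0M; [exact: sEp | exact: cvg_cst].
  - apply: cvg0M; first by have := cvg_norm id0; rewrite normr0; apply.
    by apply: cvgD; [apply: cvgM; [exact: sEg | exact: cvg_cst] | exact: cvg_cst].
near=> h.
have h_neq0 : h != 0 by near: h; exact: nbhs_dnbhs_neq.
have LQg := L2_dquot h Lg; have LQp := L2_dquot h Lphi; have Lgt := L2_shift h Lg.
rewrite (ibp_remainder h_neq0 Lg LDg Lphi LDphi).
have b1 := normr_ip_le (L2B LQg LDg) Lphi.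
have b2 := normr_ip_le Lgt (L2B LQp LDphi).
rewrite (ip_comp (shift_measurable h) (shift_preserving h) Lg Lg) mulrC in b2.
have b3 : `|h * ip mu (dquot g h) Dphi| <= `|h| * (Num.sqrt (Eg h) * c + c').
  rewrite normrM ler_wpM2l // -[ip mu (dquot g h) Dphi](subrK (ip mu Dg Dphi)) -ipBl //.
  exact: le_trans (ler_normD _ _) (lerD (normr_ip_le (L2B LQg LDg) LDphi) (lexx _)).
move: b1 b2 b3; rewrite -/(Eg h) -/(Ep h) !ler_norml.
by move=> /andP[? ?] /andP[? ?] /andP[? ?]; apply/andP; split; lra.
Unshelve. all: end_near.
Qed.

End integration_by_parts.

Lemma ip_bvec (a da : 'I_d -> 'I_d -> T -> R) j {psi} {Dpsi : 'I_d -> T -> R} :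
  (forall i, isD mu tau i (a i j) (da i j)) ->
  L2 mu psi -> (forall i, isD mu tau i psi (Dpsi i)) ->
  ip mu (bvec da j) psi = - (2^-1 * \sum_(i < d) ip mu (a i j) (Dpsi i)).
Proof.
move=> Da Lpsi Dpsi_psi; have Lda i : L2 mu (da i j) by case: (Da i).
rewrite /bvec ipZl ?ip_suml //; last exact: L2_sum.
rewrite -mulrN -sumrN; congr (_ * _).
by apply: eq_bigr => i _; apply/eqP; rewrite -addr_eq0 (isD_ibp i (Da i) (Dpsi_psi i)).
Qed.

End stationary.

Section resolvent_limit.
Context {d : nat} {a : 'I_d -> 'I_d -> T -> R} {A : R}
  (a_measurable : forall i k, measurable_fun setT (a i k))
  (a_bounded : forall i k w, `|a i k w| <= A)
  {Dpsi : 'I_d -> T -> R} (LDpsi : forall k, L2 mu (Dpsi k)).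

Let L2_aDpsi i k : L2 mu (fun w => a i k w * Dpsi k w) :=
  L2_boundedM (a_measurable i k) (a_bounded i k) (LDpsi k).

Lemma expect_aform (v : 'I_d -> T -> R) : (forall i, L2 mu (v i)) ->
  expect mu (fun w => \sum_(i < d) \sum_(k < d) a i k w * v i w * Dpsi k w) =
  \sum_(i < d) \sum_(k < d) ip mu (v i) (fun w => a i k w * Dpsi k w).
Proof.
move=> Lv; have Iv i k : Rintegrable (fun w => a i k w * v i w * Dpsi k w).
  by apply: (eq_Rintegrable _ (Rintegrable_L2M (Lv i) (L2_aDpsi i k))) => w; ring.
rewrite /expect Rintegral_sum => [|i]; last exact: Rintegrable_sum.
apply: eq_bigr => i _; rewrite Rintegral_sum => [|k]; last exact: Iv.
by apply: eq_bigr => k _; apply: eq_Rintegral => w _; ring.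
Qed.

Context {u : R -> T -> R} {Du : R -> 'I_d -> T -> R} {z : 'I_d -> T -> R}
  {psi : T -> R} {b : R}
  (Lu : forall lam, 0 < lam -> L2 mu (u lam))
  (LDu : forall lam, 0 < lam -> forall i, L2 mu (Du lam i))
  (Lz : forall i, L2 mu (z i)) (Lpsi : L2 mu psi)
  (resolvent_eq : forall lam, 0 < lam -> lam * ip mu (u lam) psi
    + 2^-1 * expect mu (fun w => \sum_(i < d) \sum_(k < d) a i k w * Du lam i w * Dpsi k w)
    = b)
  (resolvent_cvg : (fun lam => lam * ip mu (u lam) (u lam)
    + Num.sqrt (\sum_(i < d) ip mu (fun w => Du lam i w - z i w) (fun w => Du lam i w - z i w)))
    @ 0^'+ --> 0).

Lemma resolvent_limit :
  2^-1 * expect mu (fun w => \sum_(i < d) \sum_(k < d) a i k w * z i w * Dpsi k w) = b.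
Proof.
pose err lam := lam * ip mu (u lam) (u lam)
  + Num.sqrt (\sum_(i < d) ip mu (fun w => Du lam i w - z i w) (fun w => Du lam i w - z i w)).
pose K := \sum_(i < d) \sum_(k < d)
  Num.sqrt (ip mu (fun w => a i k w * Dpsi k w) (fun w => a i k w * Dpsi k w)).
apply/eqP; rewrite -subr_eq0; apply/eqP.
apply: (norm_le_cvg0_eq0 (F := 0^'+) _
  (fun lam => Num.sqrt (err lam) * Num.sqrt (ip mu psi psi) + err lam * (2^-1 * K))).
  have sqrt_err : (fun lam => Num.sqrt (err lam)) @ 0^'+ --> 0 := cvg0_sqrt resolvent_cvg.
  by apply: cvg0D; apply: cvg0M; (exact: resolvent_cvg || exact: sqrt_err || exact: cvg_cst).
near=> lam.
have lam_gt0 : 0 < lam by near: lam; exact: nbhs_right_gt.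
have lam_le1 : lam <= 1 by near: lam; exact: nbhs_right_le.
have LDuz i := L2B (LDu _ lam_gt0 i) (Lz i).
have err_u : lam * ip mu (u lam) (u lam) <= err lam by rewrite lerDl sqrtr_ge0.
have err_Du :
    Num.sqrt (\sum_i ip mu (fun w => Du lam i w - z i w) (fun w => Du lam i w - z i w))
    <= err lam by rewrite lerDr mulr_ge0 ?ip_ge0 ?ltW.
have b1 : `|lam * ip mu (u lam) psi| <= Num.sqrt (err lam) * Num.sqrt (ip mu psi psi).
  have lam01 : 0 <= lam <= 1 by rewrite ltW.
  apply: le_trans (normr_scale_ip_le lam01 (Lu _ lam_gt0) Lpsi) _.
  by rewrite ler_wpM2r ?sqrtr_ge0 // ler_sqrt // (le_trans _ err_u) ?mulr_ge0 ?ip_ge0 ?ltW.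
have b2 :
    `|\sum_i \sum_k ip mu (fun w => Du lam i w - z i w) (fun w => a i k w * Dpsi k w)|
    <= err lam * K.
  apply: le_trans (normr_sum_ip_le LDuz L2_aDpsi) _.
  by rewrite ler_wpM2r ?sumr_ge0 // => i _; rewrite sumr_ge0 // => k _; rewrite sqrtr_ge0.
have E_diff :
    \sum_i \sum_k ip mu (fun w => Du lam i w - z i w) (fun w => a i k w * Dpsi k w) =
    expect mu (fun w => \sum_(i < d) \sum_(k < d) a i k w * Du lam i w * Dpsi k w)
    - expect mu (fun w => \sum_(i < d) \sum_(k < d) a i k w * z i w * Dpsi k w).
  rewrite expect_aform ?expect_aform //; last exact: LDu.
  rewrite -sumrB; apply: eq_bigr => i _.
  rewrite -sumrB; apply: eq_bigr => k _.
  by rewrite (ipBl (LDu _ lam_gt0 i) (Lz i) (L2_aDpsi i k)).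
rewrite E_diff in b2; rewrite -(resolvent_eq _ lam_gt0) mulrCA.
move: b1 b2; rewrite !ler_norml => /andP[b1l b1r] /andP[b2l b2r].
by apply/andP; split; lra.
Unshelve. all: end_near.
Qed.

End resolvent_limit.

Lemma inH_L2 {d : nat} {tau : 'rV[R]_d -> T -> T} {f} {Df : 'I_d -> T -> R} :
  inH mu tau f Df -> L2 mu f /\ forall i, L2 mu (Df i).
Proof. by case=> Lf DDf _; split=> // i; case: (DDf i). Qed.

Lemma expect_quad_form {d : nat} (X : 'cV[R]_d) {M Z : T -> 'M[R]_d}
    {v : 'I_d -> T -> R} {C : R} :
  (forall i k, measurable_fun setT (fun w => M w i k)) ->
  (forall i k w, `|M w i k| <= C) ->
  (forall i l, L2 mu (fun w => Z w i l)) -> (forall k, L2 mu (v k)) ->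
  expect mu (fun w => ((X + Z w *m X)^T *m M w *m \col_k v k w) 0 0) =
  \sum_l X l 0 * (\sum_k ip mu (fun w => M w l k) (v k)
                  + expect mu (fun w => \sum_i \sum_k M w i k * Z w i l * v k w)).
Proof.
move=> M_meas M_bnd LZ Lv.
have LM i k : L2 mu (fun w => M w i k) := L2_bounded (M_meas i k) (M_bnd i k).
have IMZv l i k : Rintegrable (fun w => M w i k * Z w i l * v k w).
  have LMv := L2_boundedM (M_meas i k) (M_bnd i k) (Lv k).
  by apply: (eq_Rintegrable _ (Rintegrable_L2M (LZ i l) LMv)) => w; ring.
have IMv l : Rintegrable (fun w => \sum_k M w l k * v k w).
  by apply: Rintegrable_sum => k; exact: Rintegrable_L2M.
have IMZv_sum l : Rintegrable (fun w => \sum_i \sum_k M w i k * Z w i l * v k w).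
  by apply: Rintegrable_sum => i; apply: Rintegrable_sum => k; exact: IMZv.
rewrite /expect; under eq_Rintegral do rewrite quad_form_expand.
rewrite Rintegral_sum => [|l]; last exact/RintegrableZ/RintegrableD.
apply: eq_bigr => l _; rewrite RintegralZl //; last exact: RintegrableD.
rewrite (RintegralD measurableT (IMv l) (IMZv_sum l)) Rintegral_sum // => k.
exact: Rintegrable_L2M.
Qed.

End probability_space.

Theorem mainTheorem13 (R : realType) (d : nat) (disp : measure_display)
  (Omega : measurableType disp) (mu : probability Omega R)
  (tau : 'rV[R]_d -> Omega -> Omega) (sigma : Omega -> 'M[R]_d) (Lam : R)
  (da : 'I_d -> 'I_d -> Omega -> R)
  (u : R -> 'I_d -> Omega -> R) (Du : R -> 'I_d -> 'I_d -> Omega -> R)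
  (zeta : Omega -> 'M[R]_d) :
  mp_group mu tau -> ergodic mu tau -> jointly_measurable tau ->
  (forall k l, measurable_fun setT (fun w => sigma w k l)) ->
  (forall w k l, smooth (fun x => sigma (tau x w) k l)) ->
  (forall k l (s : seq 'I_d), exists M : R, forall w x,
      `|iderive s (fun y => sigma (tau y w) k l) x| <= M) ->
  0 < Lam ->
  (forall w (xi : 'rV[R]_d),
      Lam * (xi *m xi^T) 0 0 <= (xi *m amat sigma w *m xi^T) 0 0
      <= Lam^-1 * (xi *m xi^T) 0 0) ->
  (forall i j, isD mu tau i (fun w => amat sigma w i j) (da i j)) ->
  (forall lam, 0 < lam -> forall j,
      inH mu tau (u lam j) (Du lam j) /\
      forall phi Dphi, inH mu tau phi Dphi ->
        lam * ip mu (u lam j) phi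
        + 2^-1 * expect mu (fun w => \sum_(i < d) \sum_(k < d)
                              amat sigma w i k * Du lam j i w * Dphi k w)
        = ip mu (bvec da j) phi) ->
  (forall i j, L2 mu (fun w => zeta w i j)) ->
  (forall j, (fun lam => lam * ip mu (u lam j) (u lam j)
        + Num.sqrt (\sum_(i < d) ip mu (fun w => Du lam j i w - zeta w i j)
                                       (fun w => Du lam j i w - zeta w i j)))
      @ 0^'+ --> 0) ->
  forall (X : 'cV[R]_d) (psi : Omega -> R) (Dpsi : 'I_d -> Omega -> R),
    inH mu tau psi Dpsi ->
    expect mu (fun w => ((X + zeta w *m X)^T *m amat sigma w *m \col_k Dpsi k w) 0 0) = 0.
Proof.
(* Ergodicity, smoothness and ellipticity only serve to construct u_lam and zeta. *)
move=> [tau_meas tau0 _ tau_pres] _ _ _ _ sigma_derivs _ _ Da resolvent Lzeta resolvent_cvg.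
move=> X psi Dpsi Hpsi.
have [[Lpsi LDpsi] [_ Dpsi_psi _]] := (inH_L2 Hpsi, Hpsi).
have sigma_bnd (kl : 'I_d * 'I_d) : exists M, forall w, `|sigma w kl.1 kl.2| <= M.
  have [M HM] := sigma_derivs kl.1 kl.2 [::].
  by exists M => w; have := HM w 0; rewrite /= tau0.
have [S sigmaS] := uniform_bound_finite (fun kl w => sigma w kl.1 kl.2) sigma_bnd.
have a_bnd := amat_bounded sigma (fun k l => sigmaS (k, l)).
have a_meas i k : measurable_fun setT (fun w => amat sigma w i k).
  by case: (Da i k) => /L2_measurable.
rewrite (expect_quad_form X a_meas a_bnd Lzeta LDpsi) big1 // => l _.
have := resolvent_limit a_meas a_bnd LDpsi
  (fun lam lam_gt0 => (inH_L2 (resolvent lam lam_gt0 l).1).1)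
  (fun lam lam_gt0 => (inH_L2 (resolvent lam lam_gt0 l).1).2) (Lzeta^~ l) Lpsi
  (fun lam lam_gt0 => (resolvent lam lam_gt0 l).2 psi Dpsi Hpsi) (resolvent_cvg l).
rewrite (ip_bvec tau_meas tau_pres (fun i j w => amat sigma w i j) da l (Da^~ l) Lpsi
  Dpsi_psi).
have -> : \sum_k ip mu (fun w => amat sigma w l k) (Dpsi k) =
    \sum_i ip mu (fun w => amat sigma w i l) (Dpsi i).
  by apply: eq_bigr => k _; apply: eq_ipl => w; exact: amat_sym.
by move=> corrector; rewrite [X in _ * X](_ : _ = 0) ?mulr0 //; lra.
Qed.
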